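(* Let $f:\mathbb{T}^2\to\mathbb{T}^2$ be an area preserving endomorphism. Then the following are equivalent: (1) $f$ is not transitive; (2) there exist non-empty regular open sets $U,V\subset\mathbb{T}^2$ with $U=\mathbb{T}^2\setminus\overline{V}$ (equivalently $V=\mathbb{T}^2\setminus\overline{U}$) such that $f^{-1}(U)=U$ and $f^{-1}(V)=V$.
   Context: $\mathbb{T}^2=\mathbb{R}^2/\mathbb{Z}^2$ with Haar measure $\lambda$. An endomorphism is a local homeomorphism $f:\mathbb{T}^2\to\mathbb{T}^2$; it is area preserving if $\lambda(f^{-1}(B))=\lambda(B)$ for all Borel $B$. $f$ is transitive if some point has dense forward orbit $\{f^n(x):n\ge0\}$. An open set is regular if it equals the interior of its closure. *)

From HB Require Import structures.
From mathcomp Require Import all_boot all_order all_algebra generic_quotient.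
From mathcomp Require Import all_classical all_reals all_analysis.
Set Implicit Arguments. Unset Strict Implicit. Unset Printing Implicit Defensive.
Import Order.TTheory GRing.Theory Num.Theory numFieldNormedType.Exports.
Local Open Scope classical_set_scope.
Local Open Scope ring_scope.
Local Open Scope quotient_scope.

Section Torus.
Variable R : realType.

Definition tor_rel (p q : R * R) : bool :=
  (p.1 - q.1 \is a Num.int) && (p.2 - q.2 \is a Num.int).

Lemma tor_rel_refl : reflexive tor_rel.
Proof. by move=> p; rewrite /tor_rel !subrr !rpred0. Qed.

Lemma tor_rel_sym : symmetric tor_rel.
Proof.
by move=> p q; rewrite /tor_rel -(opprB p.1) -(opprB p.2) !rpredN.
Qed.

Lemma tor_rel_trans : transitive tor_rel.
Proof.
move=> q p r /andP[h1 h2] /andP[h3 h4]; apply/andP; split.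
  by rewrite -(subrKA q.1) rpredD.
by rewrite -(subrKA q.2) rpredD.
Qed.

Definition tor_equiv := EquivRel tor_rel tor_rel_refl tor_rel_sym tor_rel_trans.

Definition torus := @quotient_topology (R * R)%type {eq_quot tor_equiv}.
HB.instance Definition _ := Topological.copy torus (@quotient_topology (R * R)%type {eq_quot tor_equiv}).

Definition torus_proj : R * R -> torus := fun p => \pi_torus p.

Definition torus_borel (B : set torus) : Prop := <<s [set U | open U] >> B.

(** Haar measure of T^2: Lebesgue measure of the set of representatives
    in the fundamental domain [0,1[ x [0,1[. *)
Definition haar (B : set torus) : \bar R :=
  ((@lebesgue_measure R) \x (@lebesgue_measure R))%E
    ((torus_proj @^-1` B) `&` (`[0%R, 1%R[%classic `*` `[0%R, 1%R[%classic)).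

End Torus.

Definition local_homeomorphism (T : topologicalType) (f : T -> T) : Prop :=
  forall x, exists U : set T,
    open U /\ U x /\ open (f @` U) /\ set_inj U f /\
    {within U, continuous f} /\
    (forall W, W `<=` U -> open W -> open (f @` W)).

Definition area_preserving (R : realType) (f : torus R -> torus R) : Prop :=
  forall B, torus_borel B -> haar (f @^-1` B) = haar B.

Definition transitive_map (T : topologicalType) (f : T -> T) : Prop :=
  exists x, dense (range (fun n : nat => iter n f x)).

(* (2) -> (1): a dense orbit would enter both invariant open sets, so its
   starting point would lie in both, although they are disjoint.
   (1) -> (2): by Baire's theorem, applied in the plane to the lifts of a
   countable basis, a map without dense orbit is not topologically transitive:
   there are non-empty open sets U0, V0 with f^-n(U0) disjoint from V0 for all
   n.  Their union W is open with f^-1(W) inside W; since f preserves area and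
   non-empty open sets have positive area, f^-1(W) is dense in W.  As f is
   continuous and open, preimages commute with closure and interior, so the
   regular open set int(cl W) is invariant, and so is the complement of its
   closure, which contains V0. *)

From HB Require Import structures.
From mathcomp Require Import all_boot all_order all_algebra generic_quotient.
From mathcomp Require Import all_classical all_reals all_analysis.
Set Implicit Arguments. Unset Strict Implicit. Unset Printing Implicit Defensive.
Import Order.TTheory GRing.Theory Num.Theory numFieldNormedType.Exports.
Local Open Scope classical_set_scope.
Local Open Scope ring_scope.
Local Open Scope quotient_scope.

Lemma prod_cauchy_cvg (K : numFieldType) (U V : completeNormedModType K)
      (F : set_system ((U * V)%type : normedModType K)) :
  ProperFilter F -> cauchy F -> cvg F.
Proof.
move=> FF /cauchyP Fc.
have cvg_fst : cvg (fst @ F).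
  apply: cauchy_cvg; apply: cauchy_exP => e e0; have [x Fx] := Fc e e0.
  by exists x.1; apply: (@filterS _ F _ (ball x e)) Fx => -[y1 y2] [].
have cvg_snd : cvg (snd @ F).
  apply: cauchy_cvg; apply: cauchy_exP => e e0; have [x Fx] := Fc e e0.
  by exists x.2; apply: (@filterS _ F _ (ball x e)) Fx => -[y1 y2] [].
apply/cvg_ex; exists (lim (fst @ F), lim (snd @ F)) => A /(cvg_pair cvg_fst cvg_snd).
by rewrite /= nbhs_filterE; apply: (@filterS _ F) => -[].
Qed.

(* Baire's theorem needs a complete normed space: [R * R] gets its
   completeness instance through this alias. *)
Definition plane (R : realType) := (R * R)%type.
HB.instance Definition _ (R : realType) := NormedModule.copy (plane R) (R * R)%type.
HB.instance Definition _ (R : realType) :=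
  Uniform_isComplete.Build (plane R) (@prod_cauchy_cvg R R R).

Lemma open_ballP (K : numDomainType) (M : pseudoMetricType K) (A : set M) :
  open A <-> forall x, A x -> exists2 e : K, 0 < e & ball x e `<=` A.
Proof.
rewrite openE; split => oA x /oA; first by move=> /nbhs_ballP[e e0 eA]; exists e.
by move=> [e e0 eA]; apply/nbhs_ballP; exists e.
Qed.

Lemma iter_preimage_invariant (T : Type) (g : T -> T) (P : set T) :
  g @^-1` P = P -> forall n x, P (iter n g x) <-> P x.
Proof. by move=> gP; elim=> [//|n IHn] x; rewrite iterSr IHn -{2}gP. Qed.

Section OpenMaps.
Variable T : topologicalType.
Implicit Types (f : T -> T) (A : set T).

Definition open_map f := forall A, open A -> open (f @` A).

Lemma local_homeomorphism_continuous f : local_homeomorphism f -> continuous f.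
Proof.
move=> lhf x; have [U [oU [Ux [_ [_ [fU _]]]]]] := lhf x.
by move: fU; rewrite continuous_open_subspace // => /(_ x); apply; rewrite inE.
Qed.

Lemma local_homeomorphism_open_map f : local_homeomorphism f -> open_map f.
Proof.
move=> lhf A oA; have [U hU] := choice lhf.
have -> : f @` A = \bigcup_(x in A) f @` (A `&` U x).
  apply/seteqP; split => [y [x Ax <-]|y [x _ [z [Az _] <-]]]; last by exists z.
  by exists x => //; exists x => //; split => //; have [_ []] := hU x.
apply: bigcup_open => x _; have [oU [_ [_ [_ [_ fUo]]]]] := hU x.
by apply: fUo; [exact: subIsetr | exact: openI].
Qed.

Lemma continuous_iter f n : continuous f -> continuous (iter n f).
Proof.
move=> fc; elim: n => [|n IHn] x /=; first exact: cvg_id.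
exact: continuous_comp (IHn x) (fc _).
Qed.

Lemma regopen_open A : regopen A -> open A.
Proof. by move=> <-; exact: open_interior. Qed.

Lemma closure_setC_closure A : regopen A -> closure (~` closure A) = ~` A.
Proof. by move=> rA; rewrite closure_setC rA. Qed.

Lemma regopen_setC_closure A : regopen A -> regopen (~` closure A).
Proof. by move=> rA; rewrite /regopen closure_setC_closure // interiorC. Qed.

Definition topologically_transitive (f : T -> T) :=
  forall U V : set T, open U -> U !=set0 -> open V -> V !=set0 ->
    exists n, iter n f @^-1` U `&` V !=set0.

Lemma transitive_map_invariant_meet f U V : transitive_map f ->
  open U -> U !=set0 -> f @^-1` U = U ->
  open V -> V !=set0 -> f @^-1` V = V -> U `&` V !=set0.
Proof.
move=> [x xdense] oU U0 fU oV V0 fV.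
have [y [Uy [n _ xy]]] := xdense U U0 oU.
have [z [Vz [m _ xz]]] := xdense V V0 oV.
exists x; split; first by rewrite -(iter_preimage_invariant fU n) xy.
by rewrite -(iter_preimage_invariant fV m) xz.
Qed.

Section ContinuousOpenMap.
Variable f : T -> T.
Hypotheses (fc : continuous f) (fo : open_map f).

Lemma preimage_closure A : f @^-1` closure A = closure (f @^-1` A).
Proof.
apply/seteqP; split => x xA B.
  rewrite nbhsE => -[N [oN Nx] NB].
  have fN : nbhs (f x) (f @` N).
    by apply: open_nbhs_nbhs; split; [exact: fo | exists x].
  have [z [Az [y Ny yz]]] := xA _ fN.
  by exists y; split; [rewrite /= yz | exact: NB].
by move=> /fc/xA[y [Ay By]]; exists (f y).
Qed.

Lemma preimage_interior A : f @^-1` A° = (f @^-1` A)°.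
Proof.
have intE B : B° = ~` closure (~` B) by rewrite -interiorC setCK.
by rewrite !intE -preimage_setC preimage_closure preimage_setC.
Qed.

Lemma preimage_setC_closure A : f @^-1` A = A ->
  f @^-1` (~` closure A) = ~` closure A.
Proof. by move=> fA; rewrite -preimage_setC preimage_closure fA. Qed.

Lemma interior_closure_invariant W :
  closure (f @^-1` W) = closure W -> f @^-1` (closure W)° = (closure W)°.
Proof. by move=> fW; rewrite preimage_interior preimage_closure fW. Qed.

End ContinuousOpenMap.
End OpenMaps.

Section Torus.
Variable R : realType.
Local Notation pi := (@torus_proj R).

Lemma torus_projP (p q : R * R) : pi p = pi q <-> tor_rel p q.
Proof.
have eq_mod := @eqquotP _ _ {eq_quot (tor_equiv R)} p q.
by split => [/eq_mod|/eq_mod].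
Qed.

Definition unit_square : set (R * R) := `[0%R, 1%R[%classic `*` `[0%R, 1%R[%classic.

Lemma torus_proj_unit_square (x : torus R) : exists2 q, unit_square q & pi q = x.
Proof.
set p := repr x.
exists (p.1 - (Num.floor p.1)%:~R, p.2 - (Num.floor p.2)%:~R).
  split; rewrite /= in_itv /= subr_ge0 floor_le /= ltrBlDl -intrD1 floorD1_gt //.
rewrite -[x]reprK -/p; apply/torus_projP/andP.
by rewrite /= (addrAC p.1) (addrAC p.2) !subrr !sub0r !rpredN !intr_int.
Qed.

Lemma torus_proj_open (A : set (R * R)) : open A -> open (pi @` A).
Proof.
move=> /open_ballP oA; apply/open_ballP => x [a Aa] /torus_projP/andP[a1 a2].
have [e e0 aeA] := oA a Aa; exists e => // y /= [xy1 xy2].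
exists (a.1 + (y.1 - x.1), a.2 + (y.2 - x.2)).
  by apply: aeA; split; rewrite /ball /= opprD addrA subrr add0r opprB.
apply/torus_projP/andP; split => /=.
  by rewrite (addrC y.1) addrA addrK.
by rewrite (addrC y.2) addrA addrK.
Qed.

(* An enumeration of the balls with rational centre and radius [1/(m+1)];
   indices that decode to nothing give the whole plane. *)
Definition rational_ball (k : nat) : set (R * R) :=
  if @unpickle (rat * rat * nat)%type k is Some (q1, q2, m)
  then ball ((ratr q1 : R), (ratr q2 : R)) (m.+1%:R^-1 : R) else setT.

Lemma rational_ball_open k : open (rational_ball k).
Proof.
rewrite /rational_ball; case: unpickle => [[[q1 q2] m]|]; last exact: openT.
exact: ball_open.
Qed.

Lemma rational_ball_neq0 k : rational_ball k !=set0.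
Proof.
rewrite /rational_ball; case: unpickle => [[[q1 q2] m]|]; last by exists point.
by exists (ratr q1, ratr q2); apply: ballxx; rewrite invr_gt0 ltr0n.
Qed.

Lemma rational_ball_measurable k : measurable (rational_ball k).
Proof.
rewrite /rational_ball; case: unpickle => [[[q1 q2] m]|]; last exact: measurableT.
have -> : ball ((ratr q1 : R), (ratr q2 : R)) (m.+1%:R^-1 : R) =
    ball (ratr q1 : R) m.+1%:R^-1 `*` ball (ratr q2 : R) m.+1%:R^-1 by [].
by apply: measurableX; exact: measurable_realfun.measurable_ball.
Qed.

Lemma rational_ball_basis (A : set (R * R)) x : open A -> A x ->
  exists k, rational_ball k x /\ rational_ball k `<=` A.
Proof.
move=> /open_ballP oA /oA[e e0 xeA].
have [m me] : exists m : nat, m.+1%:R^-1 < e / 2.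
  have [N _ hN] := near_infty_natSinv_lt (PosNum (divr_gt0 e0 (ltr0n R 2))).
  by exists N; exact: hN N (leqnn N).
have r0 : 0 < m.+1%:R^-1 :> R by rewrite invr_gt0 ltr0n.
have rat_near (t : R) : exists q : rat, ball t m.+1%:R^-1 (ratr q).
  have [s [ts [q _ qs]]] := dense_rat (ex_intro _ t (ballxx t r0)) (ball_open t _).
  by exists q; rewrite qs.
have [q1 xq1] := rat_near x.1; have [q2 xq2] := rat_near x.2.
exists (pickle (q1, q2, m)); rewrite /rational_ball pickleK; split.
  by split; apply: ball_sym.
have shrink (z : R) : ball z m.+1%:R^-1 `<=` ball z (e / 2) := le_ball (ltW me).
move=> y [/= qy1 qy2]; apply: xeA; rewrite (splitr e); split.
  exact: ball_triangle (shrink _ _ xq1) (shrink _ _ qy1).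
exact: ball_triangle (shrink _ _ xq2) (shrink _ _ qy2).
Qed.

End Torus.
Arguments unit_square {R}.

Section Haar.
Variable R : realType.
Local Notation pi := (@torus_proj R).
Local Notation mu := ((@lebesgue_measure R) \x (@lebesgue_measure R))%E.

Lemma open_measurable_plane (A : set (R * R)) : open A -> measurable A.
Proof.
move=> oA; have -> : A = \bigcup_(k in [set k | rational_ball k `<=` A]) rational_ball k.
  apply/seteqP; split => [x Ax|x [k /= kA /kA //]].
  by have [k [xk kA]] := rational_ball_basis oA Ax; exists k.
by apply: bigcup_measurable => k _; exact: rational_ball_measurable.
Qed.

Lemma unit_square_measurable : measurable (@unit_square R).
Proof. by apply: measurableX; exact: measurable_itv. Qed.

Lemma torus_open_measurable (B : set (torus R)) :
  open B -> measurable (pi @^-1` B `&` unit_square).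
Proof.
move=> oB; apply: measurableI; [exact: open_measurable_plane | exact: unit_square_measurable].
Qed.

Lemma lebesgue_measure_itv_co (a d : R) : 0 < d ->
  lebesgue_measure (`[a, a + d[%classic : set R) = d%:E.
Proof.
move=> d0; rewrite lebesgue_measure_itv /= lte_fin ltrDl d0 /=.
by rewrite -EFinB addrAC subrr add0r.
Qed.

Lemma mu_square (a b d : R) : 0 < d ->
  mu (`[a, a + d[%classic `*` `[b, b + d[%classic) = (d * d)%:E.
Proof.
move=> d0; rewrite product_measure1E; try exact: measurable_itv.
rewrite [X in (X * _)%E]lebesgue_measure_itv_co //.
by rewrite [X in (_ * X)%E]lebesgue_measure_itv_co.
Qed.

Lemma haar_open_lt_pinfty (B : set (torus R)) : open B -> (haar B < +oo)%E.
Proof.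
move=> oB; have sq1 : mu unit_square = 1%E.
  by have := @mu_square 0 0 1 ltr01; rewrite !add0r mulr1.
rewrite /haar (le_lt_trans _ (_ : mu unit_square < +oo)%E) //; last by rewrite sq1 ltey.
apply: le_measure; rewrite ?inE.
- exact: torus_open_measurable.
- exact: unit_square_measurable.
- exact: subIsetr.
Qed.

Lemma square_sub_open (O : set (torus R)) q : open O ->
  unit_square q -> O (pi q) -> exists2 d : R, 0 < d &
  `[q.1, q.1 + d[%classic `*` `[q.2, q.2 + d[%classic `<=` pi @^-1` O `&` unit_square.
Proof.
move=> oO [/= q1 q2] Oq.
have /(open_ballP _).1/(_ _ Oq)[e e0 qeO] : open (pi @^-1` O) := oO.
move: q1 q2; rewrite !in_itv /= => /andP[q10 q11] /andP[q20 q21].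
set d := Num.min e (Num.min (1 - q.1) (1 - q.2)).
have d0 : 0 < d by rewrite !lt_min e0 !subr_gt0 q11 q21.
have side (a c t : R) : 0 <= a -> d <= c -> d <= 1 - a -> t \in `[a, a + d[ ->
    `|a - t| < c /\ t \in `[0, 1[.
  move=> a0 dc da; rewrite !in_itv /= => /andP[ta tb]; split.
    by rewrite distrC ger0_norm ?subr_ge0 // ltrBlDl (lt_le_trans tb) // lerD2l.
  by rewrite (le_trans a0 ta) (lt_le_trans tb) // -lerBrDl.
have de : d <= e by rewrite ge_min lexx.
have d1 : d <= 1 - q.1 by rewrite !ge_min lexx !orbT.
have d2 : d <= 1 - q.2 by rewrite !ge_min lexx !orbT.
exists d => // -[y1 y2] [/= y1d y2d].
have [qy1 y1sq] := side _ _ _ q10 de d1 y1d.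
have [qy2 y2sq] := side _ _ _ q20 de d2 y2d.
by split; [apply: qeO; split|split].
Qed.

Lemma haar_open_gt0 (O : set (torus R)) : open O -> O !=set0 -> (0 < haar O)%E.
Proof.
move=> oO [x Ox]; have [q sq qx] := torus_proj_unit_square x; rewrite -qx in Ox.
have [d d0 dO] := square_sub_open oO sq Ox.
set S := `[q.1, q.1 + d[%classic `*` `[q.2, q.2 + d[%classic.
rewrite /haar (@lt_le_trans _ _ (mu S)) //; first by rewrite mu_square // lte_fin mulr_gt0.
apply: le_measure; rewrite ?inE //; last exact: torus_open_measurable.
by apply: measurableX; exact: measurable_itv.
Qed.

Lemma haar_open_subset_dense (A B : set (torus R)) : open A -> open B ->
  B `<=` A -> haar B = haar A -> A `<=` closure B.
Proof.
move=> oA oB BA hBA x Ax; apply: contrapT => Bx.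
have : (~` B)° x by rewrite interiorC.
rewrite /interior nbhsE => -[N [oN Nx] NB].
have oAN : open (A `&` N) by exact: openI.
(* [A `&` N] is a non-empty open part of [A] missing [B]: its positive measure
   would have to come on top of [haar B] inside [haar A]. *)
pose lift (C : set (torus R)) := pi @^-1` C `&` unit_square.
have disj : lift B `&` lift (A `&` N) = set0.
  by apply/seteqP; split => // p [[Bp _] [[_ Np] _]]; exact: NB Np Bp.
have sub : lift B `|` lift (A `&` N) `<=` lift A.
  by move=> p [[Bp sp]|[[Ap _] sp]]; split => //; exact: BA.
have mlift C : open C -> measurable (lift C) by exact: torus_open_measurable.
have : (mu (lift B `|` lift (A `&` N)) <= mu (lift A))%E.
  by apply: le_measure; rewrite ?inE //; [apply: measurableU|]; exact: mlift.
rewrite measureU //; try exact: mlift.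
rewrite -/(haar B) -/(haar (A `&` N)) -/(haar A) -hBA.
have fB : haar B \is a fin_num.
  by rewrite ge0_fin_numE ?measure_ge0 ?haar_open_lt_pinfty.
by apply/negP; rewrite -ltNge lteDl // haar_open_gt0 //; exists x.
Qed.

End Haar.

Section Dynamics.
Variable R : realType.
Local Notation pi := (@torus_proj R).
Variable f : torus R -> torus R.
Hypothesis fc : continuous f.

Lemma open_preimage_iter n (U : set (torus R)) :
  open U -> open (iter n f @^-1` U).
Proof. by move=> oU; have := (continuousP _).1 (continuous_iter (n := n) fc) U oU. Qed.

Lemma topologically_transitive_transitive :
  topologically_transitive f -> transitive_map f.
Proof.
move=> ftt.
(* By Baire, some point of the plane lies in every [G k], so its orbit enters
   the image of every rational ball. *)
pose G k : set (plane R) :=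
  pi @^-1` \bigcup_n (iter n f @^-1` (pi @` rational_ball k)).
have oG k : open (G k).
  apply: bigcup_open => n _; apply: open_preimage_iter.
  exact/torus_proj_open/rational_ball_open.
have dG k : dense (G k).
  move=> O [z Oz] oO; have [b bk] := rational_ball_neq0 R k.
  have [n [t [[y yk yt] [x Ox xt]]]] := ftt _ _
    (torus_proj_open (@rational_ball_open R k))
    (ex_intro _ (pi b) (ex_intro2 _ _ b bk erefl))
    (torus_proj_open oO) (ex_intro _ (pi z) (ex_intro2 _ _ z Oz erefl)).
  by exists x; split => //; exists n => //=; rewrite xt; exists y.
have [p [_ Gp]] := Baire (fun k => conj (oG k) (dG k)) (ex_intro _ point I) openT.
exists (pi p) => O [x Ox] oO.
have [q _ qx] := torus_proj_unit_square x; rewrite -qx in Ox.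
have [k [_ kO]] := rational_ball_basis (oO : open (pi @^-1` O)) Ox.
have [n _ [z kz zp]] := Gp k I.
by exists (iter n f (pi p)); split; [rewrite -zp; exact: kO | exists n].
Qed.

Lemma area_preserving_closure_preimage (W : set (torus R)) :
  area_preserving f -> open W -> f @^-1` W `<=` W -> closure (f @^-1` W) = closure W.
Proof.
move=> fap oW fWW; have ofW : open (f @^-1` W) by exact: (continuousP _).1 fc _ oW.
have hfW : haar (f @^-1` W) = haar W by apply: fap; exact: sub_sigma_algebra.
apply/seteqP; split; first exact: closureS.
rewrite [X in _ `<=` X](closure_id _).1; last exact: closed_closure.
exact/closureS/haar_open_subset_dense.
Qed.

Lemma not_transitive_invariant_regopen : open_map f -> area_preserving f ->
  ~ transitive_map f -> exists A : set (torus R),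
    [/\ regopen A, A !=set0, ~` closure A !=set0 & f @^-1` A = A].
Proof.
move=> fo fap ntr.
have [U0 [V0 [oU0 U00 oV0 [v V0v] U0V0]]] : exists U0 V0 : set (torus R),
    [/\ open U0, U0 !=set0, open V0, V0 !=set0 &
        forall n, iter n f @^-1` U0 `&` V0 = set0].
  apply: contrapT => nUV.
  apply/ntr/topologically_transitive_transitive => U V oU U0 oV V0.
  apply: contrapT => nUV'; apply: nUV; exists U, V; split => // n.
  by apply: contrapT => /eqP/set0P UV; apply: nUV'; exists n.
pose W := \bigcup_n iter n f @^-1` U0.
have oW : open W by apply: bigcup_open => n _; exact: open_preimage_iter.
have fWW : f @^-1` W `<=` W.
  by move=> x [n _ Un]; exists n.+1 => //; change (U0 (iter n.+1 f x)); rewrite iterSr.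
have vW : ~ closure W v.
  move=> /(_ V0 (open_nbhs_nbhs (conj oV0 V0v)))[x [[n _ Ux] V0x]].
  by have : (iter n f @^-1` U0 `&` V0) x by []; rewrite U0V0.
exists (closure W)°; split.
- exact/interior_closed_regopen/closed_closure.
- have [u U0u] := U00; exists u; apply: (interiorS (@subset_closure _ W)).
  by rewrite (interior_id W).1 //; exists 0%N.
- exists v => /(closureS (@interior_subset _ _)).
  by rewrite -(closure_id _).1 //; exact: closed_closure.
- exact/interior_closure_invariant/area_preserving_closure_preimage.
Qed.

End Dynamics.

Unset Implicit Arguments.
Theorem proposition1 (R : realType) (f : torus R -> torus R) :
  local_homeomorphism f -> area_preserving f ->
  (~ transitive_map f <->
   exists U V : set (torus R),
     [/\ open U /\ regopen U /\ U !=set0,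
         open V /\ regopen V /\ V !=set0,
         U = ~` closure V,
         f @^-1` U = U & f @^-1` V = V]).
Proof.
move=> flh fap; have fc := local_homeomorphism_continuous flh.
have fo := local_homeomorphism_open_map flh; split.
  move=> /(not_transitive_invariant_regopen fc fo fap)[A [rA A0 cA0 fA]].
  exists A, (~` closure A); split.
  - by split; [exact: regopen_open|].
  - have rB := regopen_setC_closure rA.
    by split; [exact: regopen_open|split].
  - by rewrite closure_setC_closure ?setCK.
  - exact: fA.
  - exact: preimage_setC_closure.
move=> [U [V [[oU [_ U0]] [oV [_ V0]] UV fU fV]]] ftr.
have [x [Ux Vx]] := transitive_map_invariant_meet ftr oU U0 fU oV V0 fV.
by move: Ux; rewrite UV; apply; exact: subset_closure.
Qed.
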